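(* Assume $\mu$ satisfies $(\mathrm H_\mu)$ and define $\ell$ and $Q_n$ as in the context. There is a constant $C>0$ such that for every $n\ge1$, \[ \frac{1}{1-\ell(Q_n)}\cdot\frac{\ell(Q_n)}{\ell(Q_{n+1})}\le1+C\,\ell(Q_n). \]
   Context: Condition $(\mathrm H_\mu)$: $\mu=(\mu_k)_{k\ge0}$ is a probability measure on $\mathbb Z_+$ with $\sum_k k\mu_k=1$, and there is a slowly varying function $L:\mathbb R_+\to\mathbb R_+$ with $\mu_n=L(n)/n^2$ for all $n\ge1$. Let $G_\mu(s)=\sum_k\mu_ks^k$ and for $s\in(0,1]$ let $\ell(s)=\big(G_\mu(1-s)-(1-s)\big)/s$, so $G_\mu(s)=s+(1-s)\ell(1-s)$. Let $Q_n=\mathbf P(\mathcal H\ge n)$ where $\mathcal H$ is the height (maximal distance of a vertex from the root) of a $\mu$-Bienaymé (Galton–Watson) tree; then $Q_{n+1}=Q_n(1-\ell(Q_n))$. *)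

From HB Require Import structures.
From mathcomp Require Import all_boot all_order all_algebra.
From mathcomp Require Import all_classical all_reals all_analysis.
Set Implicit Arguments. Unset Strict Implicit. Unset Printing Implicit Defensive.
Import Order.TTheory GRing.Theory Num.Theory.
Import numFieldNormedType.Exports.
Local Open Scope classical_set_scope.
Local Open Scope ring_scope.

Definition slowly_varying (R : realType) (L : R -> R) : Prop :=
  measurable_fun [set x : R | 0 < x] L /\
  (forall x : R, 0 < x -> 0 < L x) /\
  (forall a : R, 0 < a -> (fun x => L (a * x) / L x) @ +oo --> (1 : R)).

Definition H_mu (R : realType) (mu : nat -> R) : Prop :=
  (forall k, 0 <= mu k) /\
  series mu @ \oo --> (1 : R) /\
  series (fun k => k%:R * mu k) @ \oo --> (1 : R) /\
  exists L : R -> R, slowly_varying L /\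
    forall n : nat, (1 <= n)%N -> mu n = L n%:R / (n%:R ^+ 2).

Definition Gmu (R : realType) (mu : nat -> R) (s : R) : R :=
  limn (series (fun k => mu k * s ^+ k)).

Definition ell (R : realType) (mu : nat -> R) (s : R) : R :=
  (Gmu mu (1 - s) - (1 - s)) / s.

(* Q_n = P(height >= n) for a mu-Bienayme tree, given by the standard
   recursion Q_0 = 1, Q_{n+1} = 1 - G_mu(1 - Q_n)
   (equivalently Q_{n+1} = Q_n (1 - ell(Q_n))). *)
Fixpoint Q (R : realType) (mu : nat -> R) (n : nat) : R :=
  match n with
  | 0 => 1
  | n'.+1 => 1 - Gmu mu (1 - Q mu n')
  end.

From HB Require Import structures.
From mathcomp Require Import all_boot all_order all_algebra.
From mathcomp Require Import all_classical all_reals all_analysis.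
From mathcomp Require Import ring lra.
Set Implicit Arguments. Unset Strict Implicit.
Import Order.TTheory GRing.Theory Num.Theory.
Import numFieldNormedType.Exports.
Local Open Scope classical_set_scope.
Local Open Scope ring_scope.

(* Expanding G_mu termwise, ell(s) = sum_k mu_k a_k(s) with
   a_k(s) = sum_(i<k) (1 - (1-s)^i) nondecreasing in s, and
   a_k(s) = s b_k(s) with b_k(s) = sum_(i<k) sum_(m<i) (1-s)^m nonincreasing in s.
   Hence ell is nondecreasing, bounded by ell(1) = mu_0 < 1 (as mu_1 > 0), and
   ell(s)/s is nonincreasing.  Since Q_(n+1) = Q_n (1 - ell(Q_n)) <= Q_n, the
   latter gives ell(Q_(n+1)) >= ell(Q_n) (1 - ell(Q_n)), so the left-hand side
   is at most (1 - ell(Q_n))^-2 <= 1 + 2 ell(Q_n) / (1 - ell(1))^2. *)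

Section EllCoefficients.
Variable R : realFieldType.
Implicit Types s t : R.

Definition ell_coef s k : R := \sum_(i < k) (1 - (1 - s) ^+ i).
Definition slope_coef s k : R := \sum_(i < k) \sum_(m < i) (1 - s) ^+ m.

Lemma subr1_geom s i : 1 - (1 - s) ^+ i = s * \sum_(m < i) (1 - s) ^+ m.
Proof.
elim: i => [|i IH]; first by rewrite big_ord0 expr0 subrr mulr0.
by rewrite big_ord_recr /= mulrDr -IH exprSr; ring.
Qed.

Lemma ell_coefE s k : ell_coef s k = s * slope_coef s k.
Proof.
by rewrite /ell_coef /slope_coef mulr_sumr; apply: eq_bigr => i _; rewrite subr1_geom.
Qed.

Lemma expr_subr_ell_coef s k : (1 - s) ^+ k - 1 + k%:R * s = s * ell_coef s k.
Proof.
elim: k => [|k IH]; first by rewrite /ell_coef big_ord0 expr0 mulr0 mul0r subrr addr0.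
by rewrite /ell_coef big_ord_recr /= -/(ell_coef s k) mulrDr -IH exprSr -natr1; ring.
Qed.

Lemma expr_subr_antitone s t m :
  0 <= t -> t <= s -> s <= 1 -> (1 - s) ^+ m <= (1 - t) ^+ m.
Proof. by move=> t0 ts s1; apply: lerXn2r; rewrite ?nnegrE; lra. Qed.

Lemma ell_coef_ge0 s k : 0 <= s -> s <= 1 -> 0 <= ell_coef s k.
Proof.
move=> s0 s1; apply: sumr_ge0 => i _; rewrite subr_ge0; apply: exprn_ile1; lra.
Qed.

Lemma ell_coef_homo s t k : 0 <= t -> t <= s -> s <= 1 -> ell_coef t k <= ell_coef s k.
Proof.
by move=> t0 ts s1; apply: ler_sum => i _; rewrite lerB // expr_subr_antitone.
Qed.

Lemma slope_coef_antitone s t k :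
  0 <= t -> t <= s -> s <= 1 -> slope_coef s k <= slope_coef t k.
Proof.
move=> t0 ts s1; apply: ler_sum => i _; apply: ler_sum => m _.
exact: expr_subr_antitone.
Qed.

End EllCoefficients.

Lemma Q_succ (R : realType) (mu : nat -> R) n :
  Q mu n != 0 -> Q mu n.+1 = Q mu n * (1 - ell mu (Q mu n)).
Proof. by move=> q0; rewrite /= /ell; field. Qed.

Section EllMonotone.
Variable R : realType.
Variable mu : nat -> R.
Implicit Types s t : R.
Hypothesis mu_ge0 : forall k, 0 <= mu k.
Hypothesis mu_mass : series mu @ \oo --> (1 : R).
Hypothesis mu_mean : series (fun k => k%:R * mu k) @ \oo --> (1 : R).

Lemma series_mu_le1 n : series mu n <= 1.
Proof.
have nd : nondecreasing_seq (series mu).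
  by apply/nondecreasing_seqP => m; rewrite seriesSr lerDl.
by have := nondecreasing_cvgn_le nd (cvgP _ mu_mass) n; rewrite (cvg_lim _ mu_mass).
Qed.

Lemma Gmu_is_cvgn x : 0 <= x -> x <= 1 -> cvgn (series (fun k => mu k * x ^+ k)).
Proof.
move=> x0 x1; apply: nondecreasing_is_cvgn.
  by apply/nondecreasing_seqP => m; rewrite seriesSr lerDl mulr_ge0 ?exprn_ge0.
exists 1 => _ [n _ <-]; apply: le_trans (series_mu_le1 n).
by apply: ler_sum => k _; rewrite ler_piMr ?exprn_ile1.
Qed.

Lemma series_ell_coef s N :
  series (fun k => mu k * (1 - s) ^+ k) N - series mu N
    + s * series (fun k => k%:R * mu k) N = s * series (fun k => mu k * ell_coef s k) N.
Proof.
elim: N => [|N IH]; first by rewrite /series /= !big_geq //; ring.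
by rewrite !seriesSr !mulrDr -IH [s * (mu N * _)]mulrCA -expr_subr_ell_coef; ring.
Qed.

Lemma ell_series s : 0 < s -> s <= 1 ->
  series (fun k => mu k * ell_coef s k) @ \oo --> ell mu s.
Proof.
move=> s0 s1.
have -> : series (fun k => mu k * ell_coef s k) = (fun N =>
    (series (fun k => mu k * (1 - s) ^+ k) N - series mu N
      + s * series (fun k => k%:R * mu k) N) * s^-1).
  by apply/funext => N; rewrite series_ell_coef mulrC mulrA mulVf ?mul1r ?gt_eqF.
have -> : ell mu s = (Gmu mu (1 - s) - 1 + s * 1) * s^-1.
  by rewrite /ell; congr (_ * _); ring.
apply: cvgMr_tmp; apply: cvgD; last exact: cvgMl_tmp.
by apply: cvgB => //; apply: Gmu_is_cvgn; lra.
Qed.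

Lemma ell_ge0 s : 0 < s -> s <= 1 -> 0 <= ell mu s.
Proof.
move=> s0 s1; apply: (cvgr_to_ge (ell_series s0 s1)).
apply: nearW => N; rewrite /series /=.
by apply: sumr_ge0 => k _; rewrite mulr_ge0 // ell_coef_ge0 // ltW.
Qed.

Lemma ell_homo s t : 0 < t -> t <= s -> s <= 1 -> ell mu t <= ell mu s.
Proof.
move=> t0 ts s1; have s0 := lt_le_trans t0 ts.
apply: (ler_cvg_to (ell_series t0 (le_trans ts s1)) (ell_series s0 s1)).
apply: nearW => N; rewrite /series /=; apply: ler_sum => k _.
by rewrite ler_wpM2l // ell_coef_homo // ltW.
Qed.

Lemma ell_slope_antitone s t : 0 < t -> t <= s -> s <= 1 ->
  ell mu s * t <= ell mu t * s.
Proof.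
move=> t0 ts s1; have s0 := lt_le_trans t0 ts.
apply: (ler_cvg_to (@cvgMr_tmp _ _ _ _ _ _ t (ell_series s0 s1))
                   (@cvgMr_tmp _ _ _ _ _ _ s (ell_series t0 (le_trans ts s1)))).
apply: nearW => N /=.
have series_slope u : series (fun k => mu k * ell_coef u k) N
    = u * series (fun k => mu k * slope_coef u k) N.
  by rewrite /series /= mulr_sumr; apply: eq_bigr => k _; rewrite ell_coefE mulrCA.
rewrite !series_slope.
have slope_le : series (fun k => mu k * slope_coef s k) N
    <= series (fun k => mu k * slope_coef t k) N.
  by apply: ler_sum => k _; rewrite ler_wpM2l // slope_coef_antitone // ltW.
have st_ge0 : 0 <= s * t by rewrite mulr_ge0 // ltW.
nra.
Qed.

Hypothesis mu1_gt0 : 0 < mu 1.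

Lemma ell1_lt1 : ell mu 1 < 1.
Proof.
rewrite /ell subrr subr0 divr1.
have G0_le : Gmu mu 0 <= mu 0.
  apply: limr_le; first exact: Gmu_is_cvgn.
  apply: nearW => -[|N]; first by rewrite /series /= big_geq.
  rewrite /series /= big_nat_recl // expr0 mulr1 big1 ?addr0 // => i _.
  by rewrite expr0n /= mulr0.
have := series_mu_le1 2; rewrite /series /= !big_nat_recr // big_geq //= add0r.
by move=> mu01; apply: (le_lt_trans G0_le); apply: lt_le_trans mu01; rewrite ltrDl.
Qed.

Lemma Q_gt0_le1 n : 0 < Q mu n <= 1.
Proof.
elim: n => [|n /andP[q0 q1]]; first by rewrite /= ltr01 lexx.
rewrite Q_succ ?gt_eqF //.
have := ell_ge0 q0 q1; have := ell_homo q0 q1 (lexx 1); have := ell1_lt1.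
by move=> *; apply/andP; split; nra.
Qed.

Lemma ell_Q_succ_ge n :
  ell mu (Q mu n) * (1 - ell mu (Q mu n)) <= ell mu (Q mu n.+1).
Proof.
have /andP[s0 s1] := Q_gt0_le1 n; have /andP[t0 _] := Q_gt0_le1 n.+1.
have x0 := ell_ge0 s0 s1.
have ts : Q mu n.+1 <= Q mu n.
  by rewrite Q_succ ?gt_eqF //; nra.
have := ell_slope_antitone t0 ts s1.
by rewrite {1}Q_succ ?gt_eqF // mulrCA -(mulrC (Q mu n)) ler_pM2l.
Qed.

End EllMonotone.

Lemma inv_subr_ratio_le (R : realFieldType) (c x y : R) :
  0 <= x -> x <= c -> c < 1 -> 0 <= y -> x * (1 - x) <= y ->
  (1 - x)^-1 * (x / y) <= 1 + 2 / (1 - c) ^+ 2 * x.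
Proof.
move=> x0 xc c1 y0 xy.
have c0 : 0 < 1 - c by rewrite subr_gt0.
(* for y = 0 the left-hand side is 0, since y^-1 = 0 *)
have [->|y_neq0] := eqVneq y 0.
  by rewrite invr0 !mulr0 ler_wpDr // mulr_ge0 // divr_ge0 // exprn_ge0 ?ltW.
have y_gt0 : 0 < y by rewrite lt_neqAle eq_sym y_neq0.
set C := 2 / (1 - c) ^+ 2.
have C0 : 0 <= C by rewrite divr_ge0 // exprn_ge0 // ltW.
have C_ge : 2 <= C * (1 - x) ^+ 2.
  by rewrite /C mulrAC ler_pdivlMr ?exprn_gt0 //; nra.
have x1 : 0 < 1 - x by lra.
rewrite mulrCA -invfM ler_pdivrMr ?mulr_gt0 //.
have : 0 <= (1 + C * x) * (1 - x) by nra.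
nra.
Qed.

Theorem mainTheorem8 (R : realType) (mu : nat -> R) :
  H_mu mu ->
  exists C : R, 0 < C /\
    forall n : nat, (1 <= n)%N ->
      (1 - ell mu (Q mu n))^-1 * (ell mu (Q mu n) / ell mu (Q mu n.+1))
        <= 1 + C * ell mu (Q mu n).
Proof.
move=> [mu_ge0 [mu_mass [mu_mean [L [[_ [L_gt0 _]] muL]]]]].
have mu1_gt0 : 0 < mu 1 by rewrite muL // expr1n divr1 L_gt0.
have c_lt1 := ell1_lt1 mu_ge0 mu_mass mu1_gt0.
exists (2 / (1 - ell mu 1) ^+ 2); split.
  by rewrite divr_gt0 // exprn_gt0 // subr_gt0.
move=> n _; have /andP[s0 s1] := Q_gt0_le1 mu_ge0 mu_mass mu_mean mu1_gt0 n.
have /andP[t0 t1] := Q_gt0_le1 mu_ge0 mu_mass mu_mean mu1_gt0 n.+1.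
apply: (inv_subr_ratio_le _ _ c_lt1).
- exact: (ell_ge0 mu_ge0 mu_mass mu_mean s0 s1).
- exact: (ell_homo mu_ge0 mu_mass mu_mean s0 s1 (lexx 1)).
- exact: (ell_ge0 mu_ge0 mu_mass mu_mean t0 t1).
- exact: (ell_Q_succ_ge mu_ge0 mu_mass mu_mean mu1_gt0 n).
Qed.
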